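(* Let $\Gamma$ be a finite connected graph, $\Sigma$ a motif in $\Gamma$ with vertices $p_1,\dots,p_m$, and $n_i$ the degree of vertex $i$ in $\Gamma$. Suppose $f$ is a real function on the vertices of $\Sigma$, not identically zero, and $\lambda\in\mathbb{R}$ are such that $$\frac{1}{n_i}\sum_{j\in\Sigma,\ j\sim i} f(j)=(1-\lambda)f(i)\quad\text{for all } i\in\Sigma.$$ Let $\Gamma^\Sigma$ be the graph obtained from $\Gamma$ by adding new vertices $q_1,\dots,q_m$, joining $q_\alpha$ and $q_\beta$ whenever $p_\alpha\sim p_\beta$, and joining each $q_\alpha$ to every vertex $p\notin\Sigma$ that is a neighbor of $p_\alpha$ in $\Gamma$. Then $\lambda$ is an eigenvalue of the normalized Laplacian of $\Gamma^\Sigma$, with an eigenfunction that equals $f(p_\alpha)$ at $p_\alpha$, equals $-f(p_\alpha)$ at $q_\alpha$ for each $\alpha$, and is $0$ at all other vertices.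
   Context: For a finite simple graph without isolated vertices, write $i\sim j$ for adjacency and $n_i$ for the degree of $i$. The normalized Laplacian acts on real functions $v$ on the vertices by $\Delta v(i)=v(i)-\frac{1}{n_i}\sum_{j\sim i}v(j)$; $\lambda$ is an eigenvalue with eigenfunction $u$ if $u\not\equiv 0$ and $\frac{1}{n_i}\sum_{j\sim i}u(j)=(1-\lambda)u(i)$ for all $i$. A motif in $\Gamma$ is a connected subgraph containing all edges of $\Gamma$ between its vertices. *)

From HB Require Import structures.
From mathcomp Require Import all_boot all_order all_algebra.
Set Implicit Arguments. Unset Strict Implicit. Unset Printing Implicit Defensive.
Import Order.TTheory GRing.Theory Num.Theory.
Local Open Scope ring_scope.

Definition simple_graph (V : finType) (e : rel V) : Prop :=
  symmetric e /\ irreflexive e.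

Definition no_isolated (V : finType) (e : rel V) : Prop :=
  forall x, exists y, e x y.

Definition connected_graph (V : finType) (e : rel V) : Prop :=
  forall x y, connect e x y.

Definition deg (V : finType) (e : rel V) (x : V) : nat := #|[set y | e x y]|.

Definition induced (V : finType) (e : rel V) (S : {set V}) : rel V :=
  [rel a b | [&& e a b, a \in S & b \in S]].

(* A motif: connected subgraph containing all edges of Gamma between its
   vertices, i.e. a nonempty vertex set S whose induced subgraph is connected. *)
Definition motif (V : finType) (e : rel V) (S : {set V}) : Prop :=
  S != set0 /\ forall x y, x \in S -> y \in S -> connect (induced e S) x y.

Definition nl_eigenfunction (R : realFieldType) (V : finType) (e : rel V)
  (lam : R) (u : V -> R) : Prop :=
  (exists i, u i != 0) /\
  forall i, (deg e i)%:R^-1 * (\sum_(j | e i j) u j) = (1 - lam) * u i.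

(* The doubled graph Gamma^Sigma: vertices V + copies q_alpha of motif
   vertices p_alpha. *)
Definition motif_vertex (V : finType) (S : {set V}) := {x : V | x \in S}.

Definition double_rel (V : finType) (e : rel V) (S : {set V}) :
  rel (V + motif_vertex S)%type :=
  fun a b =>
    match a, b with
    | inl x, inl y => e x y
    | inr q1, inr q2 => e (val q1) (val q2)
    | inl p, inr q => (p \notin S) && e (val q) p
    | inr q, inl p => (p \notin S) && e (val q) p
    end.

Definition double_fun (R : realFieldType) (V : finType) (S : {set V})
  (f : motif_vertex S -> R) : (V + motif_vertex S)%type -> R :=
  fun a =>
    match a with
    | inl p => match insub p with Some s => f s | None => 0 end
    | inr q => - f q
    end.

From HB Require Import structures.
From mathcomp Require Import all_boot all_order all_algebra.
Import Order.TTheory GRing.Theory Num.Theory.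
Local Open Scope ring_scope.

(** In the doubled graph a vertex [p_alpha] of the motif sees exactly its old
    neighbours, and a copy [q_alpha] sees the copies of the motif-neighbours of
    [p_alpha] together with the neighbours of [p_alpha] outside the motif; so
    both have their old degree, and the eigen-equation at [p_alpha] (resp.
    [q_alpha]) is the hypothesis on [f] (resp. its negative), the function being
    zero outside the motif.  At a vertex outside the motif the contributions of
    its neighbours [p_alpha] and of their copies [q_alpha] cancel. *)

Lemma deg_sum1 (T : finType) (r : rel T) x : deg r x = (\sum_(y | r x y) 1)%N.
Proof. by rewrite /deg -sum1_card; apply: eq_bigl => y; rewrite inE. Qed.

Section DoubledGraph.

Variables (V : finType) (e : rel V) (S : {set V}).

Local Notation W := (motif_vertex S).
Local Notation E := (@double_rel V e S).

Lemma big_motif_vertex {A : Type} {idx : A} (op : Monoid.com_law idx)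
    (P : pred V) (F : V -> A) :
  \big[op/idx]_(j : W | P (val j)) F (val j)
    = \big[op/idx]_(x | (x \in S) && P x) F x.
Proof. by rewrite (big_sub_cond (mem S) P F). Qed.

Lemma deg_double_inl p : p \in S -> deg E (inl p) = deg e p.
Proof.
move=> pS; rewrite !deg_sum1 big_sumType /= [X in (_ + X)%N]big_pred0 ?addn0 //.
by move=> q; rewrite pS.
Qed.

Lemma deg_double_inr (q : W) : deg E (inr q) = deg e (val q).
Proof.
rewrite !deg_sum1 big_sumType /= (big_motif_vertex _ (e (val q)) (fun=> 1%N)).
by rewrite [RHS](bigID (mem S)) addnC; congr (_ + _)%N; apply: eq_bigl => x;
  rewrite andbC.
Qed.

Variables (R : realFieldType) (f : W -> R).

Local Notation g := (double_fun f).

Lemma double_fun_val (j : W) : g (inl (val j)) = f j.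
Proof. by rewrite /= valK. Qed.

Lemma double_fun_notin x : x \notin S -> g (inl x) = 0.
Proof. by move=> xS; rewrite /= insubN. Qed.

Lemma sum_double_fun_inl (P : pred V) :
  \sum_(x | P x) g (inl x) = \sum_(j : W | P (val j)) f j.
Proof.
under [RHS]eq_bigr => j _ do rewrite -double_fun_val.
rewrite (big_motif_vertex _ P (fun x => g (inl x))) big_mkcond [RHS]big_mkcond.
apply: eq_bigr => x _.
by case: (boolP (x \in S)) => [//|xS]; rewrite double_fun_notin //; case: (P x).
Qed.

Lemma sum_double_inl_in p : p \in S ->
  \sum_(b | E (inl p) b) g b = \sum_(j : W | e p (val j)) f j.
Proof.
move=> pS; rewrite big_sumType /= [X in _ + X]big_pred0 ?addr0.
  exact: sum_double_fun_inl.
by move=> q; rewrite pS.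
Qed.

Lemma sum_double_inl_notin p : symmetric e -> p \notin S ->
  \sum_(b | E (inl p) b) g b = 0.
Proof.
move=> esym pS; rewrite big_sumType /= pS sum_double_fun_inl sumrN /=.
by rewrite [X in _ - X](eq_bigl (fun j : W => e p (val j))) ?subrr // => j;
  rewrite esym.
Qed.

Lemma sum_double_inr (q : W) :
  \sum_(b | E (inr q) b) g b = - \sum_(j : W | e (val q) (val j)) f j.
Proof.
rewrite big_sumType /= big1 ?add0r ?sumrN // => x /andP[xS _].
exact: double_fun_notin.
Qed.

End DoubledGraph.

Theorem theorem3 (R : realFieldType) (V : finType) (e : rel V)
  (S : {set V}) (f : motif_vertex S -> R) (lam : R) :
  simple_graph e -> no_isolated e -> connected_graph e ->
  motif e S ->
  (exists i, f i != 0) ->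
  (forall i : motif_vertex S,
     (deg e (val i))%:R^-1 * (\sum_(j : motif_vertex S | e (val i) (val j)) f j)
       = (1 - lam) * f i) ->
  @nl_eigenfunction R _ (@double_rel V e S) lam (double_fun f).
Proof.
move=> [esym _] _ _ _ [i0 fi0] Hf.
split; first by exists (inr i0); rewrite /= oppr_eq0.
case=> [p|q].
- have [pS|pS] := boolP (p \in S).
    have -> : p = val (Sub p pS : motif_vertex S) by rewrite SubK.
    by rewrite deg_double_inl ?valP // sum_double_inl_in ?valP // Hf
      double_fun_val.
  by rewrite sum_double_inl_notin // double_fun_notin // mulr0 mulr0.
- by rewrite deg_double_inr sum_double_inr mulrN Hf mulrN.
Qed.
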